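(* Let $v$ be a positive integer all of whose maximal prime power factors (i.e. the prime powers $p^e$ with $p^e\mid v$, $p^{e+1}\nmid v$) are congruent to $1$ modulo $4$. Then there exists a $(3v,3,4,1)$-BRDF.
   Context: Let $G$ be a finite group written additively, $H$ a subgroup, and $k\ge2,\lambda\ge1$ integers. A $(G,H,k,\lambda)$-relative difference family (RDF) is a collection of $k$-subsets of $G$ (base blocks) such that the multiset of differences $x-y$ ($x\ne y$ in a common base block) contains every element of $G\setminus H$ exactly $\lambda$ times and no element of $H$. A $(G,H,k,\lambda)$-Banff relative difference family (BRDF) is a $(G,H,k,\lambda)$-RDF such that additionally (2) all base blocks are disjoint from $H$, and (3) the base blocks and their negatives $-B=\{-b:b\in B\}$ are pairwise disjoint. A $(g,h,k,\lambda)$-BRDF means a $(G,H,k,\lambda)$-BRDF for some group $G$ of order $g$ and subgroup $H$ of order $h$. *)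

From HB Require Import structures.
From mathcomp Require Import all_boot all_order all_algebra.
Set Implicit Arguments. Unset Strict Implicit. Unset Printing Implicit Defensive.
Import GRing.Theory.
Local Open Scope ring_scope.

Definition is_subgroup (G : finZmodType) (H : {set G}) : Prop :=
  0 \in H /\ (forall x y, x \in H -> y \in H -> x - y \in H).

Definition negset (G : finZmodType) (B : {set G}) : {set G} :=
  [set - b | b in B].

Definition diff_count (G : finZmodType) (B : {set G}) (g : G) : nat :=
  #|[set p : G * G | [&& p.1 \in B, p.2 \in B, p.1 != p.2 & p.1 - p.2 == g]]|.

Definition family_diff_count (G : finZmodType) (F : seq {set G}) (g : G) : nat :=
  (\sum_(B <- F) diff_count B g)%N.

Definition RDF (G : finZmodType) (H : {set G}) (k lam : nat) (F : seq {set G}) : Prop :=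
  (forall B, B \in F -> #|B| = k) /\
  (forall g : G, g \notin H -> family_diff_count F g = lam) /\
  (forall g : G, g \in H -> family_diff_count F g = 0%N).

(* (G, H, k, lambda)-Banff relative difference family. Condition (3): the
   2|F| sets B_1,...,B_n,-B_1,...,-B_n are pairwise disjoint. *)
Definition BRDF (G : finZmodType) (H : {set G}) (k lam : nat) (F : seq {set G}) : Prop :=
  RDF H k lam F /\
  (forall B, B \in F -> [disjoint B & H]) /\
  (forall i j, (i < size F)%N -> (j < size F)%N ->
     [disjoint nth set0 F i & negset (nth set0 F j)] /\
     (i != j -> [disjoint nth set0 F i & nth set0 F j] /\
                [disjoint negset (nth set0 F i) & negset (nth set0 F j)])).

Definition exists_BRDF (g h k lam : nat) : Prop :=
  exists (G : finZmodType) (H : {set G}),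
    #|G| = g /\ is_subgroup H /\ #|H| = h /\ exists F : seq {set G}, BRDF H k lam F.

From HB Require Import structures.
From mathcomp Require Import all_boot all_order all_algebra.
From mathcomp Require Import cyclic finfield zify.

(* Let A be a finite abelian group without 2-torsion carrying an additive map
   s with s (s x) = - x.  The nonzero elements of A fall into orbits
   {y, s y, - y, - s y} of size 4.  In Z_3 * A, relative to a representative y
   of each orbit, label y and - y with 1 and s y, - s y with -1, and take the
   four labelled points of each orbit as a base block.  The differences from
   (label w, w) inside its block are (0, 2 w), (- label w, w - s w) and
   (- label w, w + s w).  The maps w |-> 2 w, w - s w, w + s w are bijections
   of A, and w + s w = u - s u exactly when w = - s u; since u and - s u carry
   opposite labels, every (c, r) with r <> 0 is a difference exactly once.
   Labels never vanish and label (- w) = label w, so no block meets the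
   negative of a block.
   Such an A of order v exists when every prime-power factor q of v is 1 mod 4:
   in the field with q elements, -1 is a square since 4 divides q - 1, and s is
   multiplication by a square root of -1; then take products. *)

Set Implicit Arguments. Unset Strict Implicit. Unset Printing Implicit Defensive.
Import GRing.Theory.

(* Makes [A * B] a [finZmodType] whenever [A] and [B] are. *)
HB.saturate prod.

Local Open Scope ring_scope.

Lemma Z3_double (d : 'Z_3) : d + d = - d.
Proof. by apply/eqP; case: d => [[|[|[|?]]] ?]. Qed.

Lemma Z3_neq_opp (d : 'Z_3) : d != 0 -> d != - d.
Proof. by case: d => [[|[|[|?]]] ?]. Qed.

Lemma Z3_eq_or_opp (c d : 'Z_3) : c != 0 -> d != 0 -> (c == d) = (c != - d).
Proof. by case: c => [[|[|[|?]]] ?] //; case: d => [[|[|[|?]]] ?]. Qed.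

Lemma morphB_inj (U V : zmodType) (f : U -> V) :
  {morph f : x y / x - y} -> (forall x, f x = 0 -> x = 0) -> injective f.
Proof.
move=> fB f0 x y fxy; apply/eqP; rewrite -subr_eq0; apply/eqP/f0.
by rewrite fB fxy subrr.
Qed.

Lemma subr_pair (U V : zmodType) (a c : U) (b d : V) :
  (a, b) - (c, d) = (a - c, b - d).
Proof. by []. Qed.

Lemma diff_countE (G : finZmodType) (B : {set G}) g :
  diff_count B g = #|[set x in B | (g != 0) && (x - g \in B)]|.
Proof.
rewrite /diff_count -(card_imset _ (f := fun x => (x, x - g))); last by move=> x y [].
apply: eq_card => -[x y]; rewrite inE /=; apply/and4P/imsetP.
  case=> xB yB xy /eqP <-; exists x; last by rewrite subKr.
  by rewrite inE xB subKr yB subr_eq0 xy.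
case=> z; rewrite inE => /and3P[zB g0 zgB] [-> ->].
by rewrite zB zgB subKr eqxx -subr_eq0 subKr g0.
Qed.

Lemma card_fiber_inj (T : finType) (f : T -> T) y :
  injective f -> #|[set x | f x == y]| = 1%N.
Proof.
move=> f_inj; rewrite -(cards1 y) -(card_preimset [set y] f_inj).
by apply: eq_card => x; rewrite !inE.
Qed.

Lemma card_set2_sep (T : finType) (P : pred T) a b :
  P b = ~~ P a -> #|[set x in [set a; b] | P x]| = 1%N.
Proof.
move=> Pb; apply/eqP/cards1P; exists (if P a then a else b); apply/setP => x; rewrite !inE.
have [->|xa] := eqVneq x a; case Pa: (P a) in Pb *; rewrite /= ?eqxx ?Pa ?(negbTE xa) //.
- by apply/esym/eqP => ab; rewrite -ab Pa in Pb.
- by case: eqP => // ->; rewrite Pb.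
- by case: eqP => // ->; rewrite Pb.
Qed.

Section QuarterTurn.
Variables (A : finZmodType) (s : A -> A).
Hypothesis sB : {morph s : x y / x - y}.
Hypothesis ssN : forall x, s (s x) = - x.
Hypothesis no2torsion : forall x : A, x + x = 0 -> x = 0.

Lemma s0 : s 0 = 0.
Proof. by have := sB 0 0; rewrite !subrr. Qed.

Lemma sN x : s (- x) = - s x.
Proof. by rewrite -sub0r sB s0 sub0r. Qed.

Lemma s_eq0 x : (s x == 0) = (x == 0).
Proof.
apply/eqP/eqP => [sx0|->]; last exact: s0.
by apply: oppr_inj; rewrite -ssN sx0 s0 oppr0.
Qed.

Lemma s_fix_eq0 x : s x = x -> x = 0.
Proof. by move=> sx; apply: no2torsion; have := ssN x; rewrite !sx => {1}->; rewrite addNr. Qed.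

Lemma s_anti_eq0 x : s x = - x -> x = 0.
Proof.
move=> sx; apply: no2torsion; have := ssN x.
by rewrite sx sN sx opprK => {1}->; rewrite addNr.
Qed.

Definition pmset x : {set A} := [set x; - x].

Lemma pmset_refl x : x \in pmset x.
Proof. by rewrite !inE eqxx. Qed.

Lemma mem_pmsetN x y : (- x \in pmset y) = (x \in pmset y).
Proof. by rewrite !inE eqr_opp eqr_oppLR orbC. Qed.

Lemma card_pmset x : x != 0 -> #|pmset x| = 2%N.
Proof.
move=> x0; rewrite cards2; suff -> : x != - x by [].
by apply: contra x0 => /eqP xN; apply/eqP/no2torsion; rewrite {1}xN addNr.
Qed.

Lemma s_notin_pmset x : x != 0 -> s x \notin pmset x.
Proof.
move=> x0; rewrite !inE negb_or; apply/andP; split; apply: contra x0 => /eqP sx; apply/eqP.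
  exact: s_fix_eq0.
exact: s_anti_eq0.
Qed.

Lemma disjoint_pmset_s x : x != 0 -> [disjoint pmset x & pmset (s x)].
Proof.
move=> x0; rewrite disjoint_sym disjoints_subset; apply/subsetP => y.
rewrite in_setC => /set2P[]->; rewrite ?mem_pmsetN; exact: s_notin_pmset.
Qed.

Definition orbit4 y : {set A} := pmset y :|: pmset (s y).

Lemma orbit4_refl y : y \in orbit4 y.
Proof. by rewrite inE pmset_refl. Qed.

Lemma mem_orbit4N y : - y \in orbit4 y.
Proof. by rewrite inE mem_pmsetN pmset_refl. Qed.

Lemma mem_orbit4S y : s y \in orbit4 y.
Proof. by rewrite inE pmset_refl orbT. Qed.

Lemma card_orbit4 y : y != 0 -> #|orbit4 y| = 4%N.
Proof.
move=> y0; rewrite cardsU (disjoint_setI0 (disjoint_pmset_s y0)) cards0.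
by rewrite !card_pmset ?s_eq0.
Qed.

Lemma orbit4_closed z y : z \in orbit4 y -> orbit4 z = orbit4 y.
Proof.
case/setUP => /set2P[]-> ; apply/setP => x; rewrite !inE ?sN ?ssN ?opprK;
  by case: (x == y); case: (x == - y); case: (x == s y); case: (x == - s y).
Qed.

Lemma orbit4_eq0 z y : z \in orbit4 y -> (z == 0) = (y == 0).
Proof. by case/setUP => /set2P[]->; rewrite ?oppr_eq0 ?s_eq0. Qed.

Definition orbit_rep y : A := odflt 0 [pick z in orbit4 y].

Lemma orbit_rep_in y : orbit_rep y \in orbit4 y.
Proof. by rewrite /orbit_rep; case: pickP => [z //|/(_ y)]; rewrite orbit4_refl. Qed.

Lemma orbit_rep_eq z y : z \in orbit4 y -> orbit_rep z = orbit_rep y.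
Proof. by rewrite /orbit_rep => /orbit4_closed ->. Qed.

Lemma orbit4_rep y : orbit4 (orbit_rep y) = orbit4 y.
Proof. exact: orbit4_closed (orbit_rep_in y). Qed.

Lemma orbit_repK y : orbit_rep (orbit_rep y) = orbit_rep y.
Proof. exact: orbit_rep_eq (orbit_rep_in y). Qed.

Lemma orbit_rep_eq0 y : (orbit_rep y == 0) = (y == 0).
Proof. exact: orbit4_eq0 (orbit_rep_in y). Qed.

Lemma mem_orbit4_rep y w : orbit_rep y = y ->
  (w \in orbit4 y) = (orbit_rep w == y).
Proof.
move=> ry; apply/idP/eqP => [/orbit_rep_eq -> // | <-].
by rewrite orbit4_rep orbit4_refl.
Qed.

Definition label w : 'Z_3 := if w \in pmset (orbit_rep w) then 1 else -1.

Lemma label_neq0 w : label w != 0.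
Proof. by rewrite /label; case: ifP. Qed.

Lemma labelN w : label (- w) = label w.
Proof. by rewrite /label (orbit_rep_eq (mem_orbit4N w)) mem_pmsetN. Qed.

Lemma labelS w : w != 0 -> label (s w) = - label w.
Proof.
move=> w0; rewrite /label (orbit_rep_eq (mem_orbit4S w)).
have r0 : orbit_rep w != 0 by rewrite orbit_rep_eq0.
have wr : w \in orbit4 (orbit_rep w) by rewrite orbit4_rep orbit4_refl.
move: (orbit_rep w) r0 wr => r r0.
case/setUP => /set2P[]->; rewrite ?sN ?ssN ?opprK ?mem_pmsetN pmset_refl;
  by rewrite (negbTE (s_notin_pmset r0)) ?opprK.
Qed.

Lemma double_eq0 (x : A) : (x + x == 0) = (x == 0).
Proof. by apply/eqP/eqP => [/no2torsion | ->]; rewrite ?addr0. Qed.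

Lemma sub_s_eq0 x : (x - s x == 0) = (x == 0).
Proof. by rewrite subr_eq0; apply/eqP/eqP => [/esym/s_fix_eq0 | ->]; rewrite ?s0. Qed.

Lemma add_s_eq0 x : (x + s x == 0) = (x == 0).
Proof.
rewrite addr_eq0; apply/eqP/eqP => [xE | ->]; last by rewrite s0 oppr0.
by apply: s_anti_eq0; rewrite {2}xE opprK.
Qed.

Lemma double_inj : injective (fun x : A => x + x).
Proof.
apply: (@morphB_inj A A) => [x y | x /eqP]; first by rewrite opprD addrACA.
by rewrite double_eq0 => /eqP.
Qed.

Lemma sub_s_inj : injective (fun x : A => x - s x).
Proof.
apply: (@morphB_inj A A) => [x y | x /eqP]; first by rewrite sB !opprD !opprK addrACA.
by rewrite sub_s_eq0 => /eqP.
Qed.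

Lemma add_s_inj : injective (fun x : A => x + s x).
Proof.
apply: (@morphB_inj A A) => [x y | x /eqP]; first by rewrite sB opprD addrACA.
by rewrite add_s_eq0 => /eqP.
Qed.

Definition point w : 'Z_3 * A := (label w, w).

Lemma point_inj : injective point.
Proof. by move=> x y []. Qed.

Definition block y : {set 'Z_3 * A} := point @: orbit4 y.

Lemma card_block y : y != 0 -> #|block y| = 4%N.
Proof. by move=> y0; rewrite card_imset ?card_orbit4 //; exact: point_inj. Qed.

Lemma block_rep y : block (orbit_rep y) = block y.
Proof. by rewrite /block orbit4_rep. Qed.

Lemma diff_count_block y g : diff_count (block y) g =
  #|[set w in orbit4 y | (g != 0) && (point w - g \in block y)]|.
Proof.
rewrite diff_countE -(card_imset _ point_inj); apply: eq_card => x.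
rewrite inE; apply/andP/imsetP => [[/imsetP[w wy ->] Pw] | [w]].
  by exists w; rewrite // inE wy.
by rewrite inE => /andP[wy Pw] ->; rewrite imset_f.
Qed.

Definition block_diffs w : {set 'Z_3 * A} := [set point w - point u | u in orbit4 w].

Lemma mem_block_diffs w g : (point w - g \in block w) = (g \in block_diffs w).
Proof.
apply/imsetP/imsetP => -[u uw E]; exists u => //; last by rewrite E subKr.
by rewrite -E subKr.
Qed.

Lemma block_diffsE w : w != 0 -> block_diffs w =
  [set 0; (0, w + w)] :|: [set (- label w, w - s w); (- label w, w + s w)].
Proof.
move=> w0; rewrite /block_diffs imsetU !imsetU1 !imset_set1 /point.
by rewrite !subr_pair !labelN (labelS w0) !subrr !opprK Z3_double.
Qed.

Lemma mem_block_diffs_nz w c r : w != 0 ->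
  ((c, r) != 0) && ((c, r) \in block_diffs w) =
  [|| (c == 0) && (r == w + w), (c == - label w) && (r == w - s w)
    | (c == - label w) && (r == w + s w)].
Proof.
move=> w0; rewrite block_diffsE // !inE !xpair_eqE.
have [-> | r0] := eqVneq r 0; last by rewrite !andbF.
rewrite !(eq_sym (0 : A)) double_eq0 sub_s_eq0 add_s_eq0 (negbTE w0) !andbF.
by case: (c == 0).
Qed.

Lemma card_diff_witnesses c r :
  #|[set w | [&& w != 0, (c, r) != 0 & (c, r) \in block_diffs w]]| = (r != 0).
Proof.
have [-> | r0] := eqVneq r 0.
  apply/eqP; rewrite cards_eq0; apply/eqP/setP => w; rewrite !inE.
  case: eqVneq => //= w0; rewrite mem_block_diffs_nz //.
  by rewrite !(eq_sym (0 : A)) double_eq0 sub_s_eq0 add_s_eq0 (negbTE w0) !andbF.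
rewrite (eq_card (B := [set w | (w != 0) && [|| (c == 0) && (r == w + w),
    (c == - label w) && (r == w - s w) | (c == - label w) && (r == w + s w)]]));
  last by move=> w; rewrite !inE; case: eqVneq => //= w0; rewrite mem_block_diffs_nz.
have [-> | c0] := eqVneq c 0.
  apply: etrans (card_fiber_inj r double_inj); apply: eq_card => w.
  rewrite !inE (eq_sym 0) oppr_eq0 (negbTE (label_neq0 w)) /= orbF.
  have [->|w0] := eqVneq w 0; first by rewrite addr0 (eq_sym _ r) (negbTE r0) andbF.
  by rewrite eq_sym.
have [u ru] : exists u, u - s u = r.
  by have [m _ mK] := injF_bij sub_s_inj; exists (m r); exact: mK.
have u0 : u != 0 by rewrite -sub_s_eq0 ru.
apply: etrans (@card_set2_sep _ (fun w => c == - label w) u (- s u) _); last first.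
  by rewrite /= labelN labelS // opprK Z3_eq_or_opp ?label_neq0.
apply: eq_card => w; rewrite !inE /=.
have -> : (r == w - s w) = (w == u).
  by rewrite -ru eq_sym; apply/eqP/eqP => [/sub_s_inj | ->].
have -> : (r == w + s w) = (w == - s u).
  rewrite -ru eq_sym; apply/eqP/eqP => [E | ->]; last by rewrite sN ssN opprK addrC.
  by apply: add_s_inj; rewrite /= E sN ssN opprK addrC.
have [->|wu] := eqVneq w u; first by rewrite u0 /=; case: (c == _).
have [->|wsu] := eqVneq w (- s u); first by rewrite oppr_eq0 s_eq0 u0 /=; case: (c == _).
by rewrite !andbF.
Qed.

Definition reps : seq A := [seq y <- enum A | (y != 0) && (orbit_rep y == y)].

Definition family : seq {set 'Z_3 * A} := map block reps.

Definition axis : {set 'Z_3 * A} := [set g | g.2 == 0].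

Lemma mem_reps y : (y \in reps) = (y != 0) && (orbit_rep y == y).
Proof. by rewrite mem_filter mem_enum andbT. Qed.

Lemma nth_family i : (i < size reps)%N -> nth set0 family i = block (nth 0 reps i).
Proof. by move=> i_lt; rewrite (nth_map 0). Qed.

Lemma family_diff_count_witnesses g : family_diff_count family g =
  #|[set w | [&& w != 0, g != 0 & g \in block_diffs w]]|.
Proof.
rewrite /family_diff_count big_map big_filter big_enum_cond -sum1_card.
rewrite [RHS](partition_big orbit_rep (fun y => (y != 0) && (orbit_rep y == y))) /=.
  apply: eq_bigr => y /andP[y0 /eqP ry]; rewrite diff_count_block -sum1_card.
  apply: eq_bigl => w; rewrite in_set (mem_orbit4_rep _ ry) in_set.
  have [wy|] := eqVneq (orbit_rep w) y; last by rewrite andbF.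
  by rewrite -wy block_rep mem_block_diffs -orbit_rep_eq0 wy y0 andbT.
by move=> w; rewrite inE => /andP[w0 _]; rewrite orbit_rep_eq0 w0 orbit_repK eqxx.
Qed.

Lemma family_diff_countE g : family_diff_count family g = (g \notin axis).
Proof.
by case: g => c r; rewrite family_diff_count_witnesses card_diff_witnesses !inE.
Qed.

Lemma disjoint_block_axis y : y != 0 -> [disjoint block y & axis].
Proof.
move=> y0; rewrite disjoint_subset; apply/subsetP => _ /imsetP[w wy ->].
by rewrite !inE (orbit4_eq0 wy) y0.
Qed.

Lemma disjoint_block_negset y z : [disjoint block y & negset (block z)].
Proof.
rewrite disjoint_subset; apply/subsetP => _ /imsetP[w _ ->]; rewrite !inE.
apply/imsetP => -[_ /imsetP[u _ ->] wu].
have := congr1 fst wu; have /= -> := congr1 snd wu; rewrite labelN => /eqP.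
exact/negP/Z3_neq_opp/label_neq0.
Qed.

Lemma disjoint_block y z :
  y \in reps -> z \in reps -> y != z -> [disjoint block y & block z].
Proof.
rewrite !mem_reps /block imset_disjoint; last exact: point_inj.
move=> /andP[_ /eqP ry] /andP[_ /eqP rz] yz; rewrite disjoints_subset.
by apply/subsetP => w; rewrite in_setC (mem_orbit4_rep _ ry) (mem_orbit4_rep _ rz) => /eqP->.
Qed.

Lemma axis_subgroup : is_subgroup axis.
Proof.
split=> [|x y]; first by rewrite inE.
by rewrite !inE => /eqP x0 /eqP y0; rewrite /= x0 y0 subrr.
Qed.

Lemma card_axis : #|axis| = 3%N.
Proof.
rewrite (eq_card (B := setX [set: 'Z_3] [set 0])) ?cardsX ?cardsT ?card_ord ?cards1 //.
by case=> c r; rewrite !inE.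
Qed.

Lemma family_BRDF : BRDF axis 4 1 family.
Proof.
have reps_neq0 y : y \in reps -> y != 0 by rewrite mem_reps => /andP[].
split; [split; [|split] | split].
- by move=> _ /mapP[y /reps_neq0 y0 ->]; exact: card_block.
- by move=> g /negbTE gA; rewrite family_diff_countE gA.
- by move=> g gA; rewrite family_diff_countE gA.
- by move=> _ /mapP[y /reps_neq0 y0 ->]; exact: disjoint_block_axis.
move=> i j; rewrite size_map => i_lt j_lt; rewrite !nth_family //.
split=> [|ij]; first exact: disjoint_block_negset.
have yi : nth 0 reps i \in reps by exact: mem_nth.
have yj : nth 0 reps j \in reps by exact: mem_nth.
have yij : nth 0 reps i != nth 0 reps j by rewrite nth_uniq // filter_uniq ?enum_uniq.
have disj := disjoint_block yi yj yij.
by split; last rewrite imset_disjoint //; exact: oppr_inj.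
Qed.

Lemma quarter_turn_BRDF : exists_BRDF (3 * #|A|) 3 4 1.
Proof.
exists ('Z_3 * A)%type, axis; rewrite card_prod card_ord.
split=> //; split; first exact: axis_subgroup.
by split; [exact: card_axis | exists family; exact: family_BRDF].
Qed.
End QuarterTurn.

Definition quarter_turn_order (n : nat) : Prop :=
  exists (A : finZmodType) (s : A -> A),
    [/\ #|A| = n, {morph s : x y / x - y}, (forall x, s (s x) = - x)
      & (forall x : A, x + x = 0 -> x = 0)].

Lemma quarter_turn_order_BRDF n : quarter_turn_order n -> exists_BRDF (3 * n) 3 4 1.
Proof. by case=> A [s [<- sB ssN A2]]; exact: quarter_turn_BRDF. Qed.

Lemma quarter_turn_order1 : quarter_turn_order 1.
Proof.
have all_eq (x y : 'I_1) : x = y by rewrite (ord1 x) (ord1 y).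
by exists 'I_1, id; split => [|x y|x|x _]; rewrite ?card_ord //; apply: all_eq.
Qed.

Lemma quarter_turn_orderM m n :
  quarter_turn_order m -> quarter_turn_order n -> quarter_turn_order (m * n).
Proof.
case=> A [sA [cardA sAB sAN A2]] [B [sB [cardB sBB sBN B2]]].
exists (A * B)%type, (fun x => (sA x.1, sB x.2)); split.
- by rewrite card_prod cardA cardB.
- by move=> [a b] [c d] /=; rewrite sAB sBB.
- by move=> [a b] /=; rewrite sAN sBN.
- by move=> [a b] [/A2 -> /B2 ->].
Qed.

Lemma finField_sqrtN1 (F : finFieldType) : (#|F| %% 4 = 1)%N -> exists i : F, i ^+ 2 = -1.
Proof.
move=> F4; set n := #|F|.-1; have F_gt1 := finNzRing_gt1 F.
have cardF : #|F| = n.+1 by rewrite prednK // ltnW.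
have /hasP[z _ z_prim] : has n.-primitive_root (enum [pred x : F | x != 0]).
  apply: has_prim_root; rewrite ?enum_uniq -?cardE ?cardC1 //; first by rewrite -ltnS -cardF.
  apply/allP => x; rewrite mem_enum inE => x0; rewrite unity_rootE.
  by apply/eqP/(mulfI x0); rewrite mulr1 -exprS -cardF expf_card.
have n4 : (4 %| n)%N by move: F4; rewrite cardF; lia.
have w_prim := dvdn_prim_root z_prim n4; set w := z ^+ _ in w_prim.
exists w; apply/eqP; rewrite -[_ == _]orFb.
have <- : (w ^+ 2 == 1) = false by rewrite -(expr0 w) (eq_prim_root_expr w_prim).
by rewrite -sqrf_eq1 -exprM (prim_expr_order w_prim).
Qed.

Lemma finField_quarter_turn (F : finFieldType) :
  (#|F| %% 4 = 1)%N -> 2%:R != 0 :> F -> quarter_turn_order #|F|.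
Proof.
move=> F4 two0; have [i i2] := finField_sqrtN1 F4.
exists F, ( *%R i); split => // [x y | x | x].
- by rewrite mulrBr.
- by rewrite mulrA -expr2 i2 mulN1r.
- by rewrite -mulr2n -mulr_natl => /eqP; rewrite mulf_eq0 (negbTE two0) => /eqP.
Qed.

Lemma quarter_turn_order_pfactor p e :
  prime p -> (p ^ e = 1 %[mod 4])%N -> quarter_turn_order (p ^ e).
Proof.
move=> p_pr pe1; have [-> | e_gt0] := posnP e; first exact: quarter_turn_order1.
have p_odd : odd p.
  by move/(congr1 odd): pe1; rewrite odd_mod // oddX (gtn_eqF e_gt0).
have [F pF cardF] := pPrimePowerField p_pr e_gt0.
rewrite -cardF; apply: finField_quarter_turn; first by rewrite cardF pe1.
by rewrite -(dvdn_pcharf pF) (dvdn_prime2 p_pr) //; apply: contraL p_odd => /eqP->.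
Qed.

Lemma quarter_turn_order_of_factors v : (0 < v)%N ->
  (forall p, prime p -> (p %| v)%N -> (p ^ logn p v = 1 %[mod 4])%N) ->
  quarter_turn_order v.
Proof.
move=> v_gt0 hv; rewrite (prod_prime_decomp v_gt0) prime_decompE big_map /= big_seq.
apply: big_ind => [|m n|p]; [exact: quarter_turn_order1 | exact: quarter_turn_orderM |].
rewrite mem_primes => /and3P[p_pr _ p_dvd].
exact: quarter_turn_order_pfactor (hv p p_pr p_dvd).
Qed.

Local Close Scope ring_scope.
Unset Implicit Arguments.

Theorem mainTheorem7 (v : nat) :
  (0 < v)%N ->
  (forall p : nat, prime p -> (p %| v)%N -> (p ^ logn p v = 1 %[mod 4])%N) ->
  exists_BRDF (3 * v) 3 4 1.
Proof.
by move=> v_gt0 hv; apply/quarter_turn_order_BRDF/quarter_turn_order_of_factors.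
Qed.
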